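(* Let $X$ be a connected quandle of type $t<\infty$. Then for all $x,y\in X$, $e_x^{t}=e_y^{t}$ in $\mathrm{As}(X)$, and this element lies in the center of $\mathrm{As}(X)$.
   Context: A quandle is a set $X$ with a binary operation $\lhd$ such that $a\lhd a=a$ for all $a$, each map $x\mapsto x\lhd a$ is a bijection of $X$, and $(a\lhd b)\lhd c=(a\lhd c)\lhd(b\lhd c)$ for all $a,b,c$. The adjoint group $\mathrm{As}(X)$ is the group with generators $e_x$ ($x\in X$) and relations $e_{x\lhd y}=e_y^{-1}e_xe_y$. It acts on $X$ from the right by $x\cdot e_y=x\lhd y$; $X$ is connected if this action is transitive. $x\lhd^N y$ denotes the $N$-fold application of $\bullet\lhd y$ to $x$; $X$ is of type $t$ if $t$ is the smallest positive integer $N$ with $x\lhd^N y=x$ for all $x,y\in X$. *)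

From mathcomp Require Import all_boot.
Set Implicit Arguments. Unset Strict Implicit. Unset Printing Implicit Defensive.

Definition quandle (X : Type) (op : X -> X -> X) : Prop :=
  [/\ forall a, op a a = a,
      forall a, bijective (fun x => op x a)
    & forall a b c, op (op a b) c = op (op a c) (op b c)].

(* Words in the generators of As(X): (x, true) stands for e_x and
   (x, false) for e_x^{-1}; a word is read left to right as a product. *)
Definition word (X : Type) := seq (X * bool).

(* The congruence on words defining the adjoint group
   As(X) = < e_x (x in X) | e_{x ◁ y} = e_y^{-1} e_x e_y >:
   the smallest equivalence relation, compatible with concatenation,
   containing free cancellation and the defining relations.
   Multiplication in As(X) is concatenation, the identity is [::]. *)
Inductive as_eq (X : Type) (op : X -> X -> X) : word X -> word X -> Prop :=
  | as_refl u : as_eq op u u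
  | as_sym u v : as_eq op u v -> as_eq op v u
  | as_trans u v w : as_eq op u v -> as_eq op v w -> as_eq op u w
  | as_cong a b u v : as_eq op u v -> as_eq op (a ++ u ++ b) (a ++ v ++ b)
  | as_cancel x s : as_eq op [:: (x, s); (x, ~~ s)] [::]
  | as_rel x y : as_eq op [:: (op x y, true)] [:: (y, false); (x, true); (y, true)].

(* The right action of As(X) on X, as a relation: [act_rel op w x z] means
   x . w = z, where x . e_y = x ◁ y and x . e_y^{-1} is the unique m with
   m ◁ y = x. *)
Fixpoint act_rel (X : Type) (op : X -> X -> X) (w : word X) (x z : X) : Prop :=
  match w with
  | [::] => x = z
  | (y, s) :: w' =>
      exists m, (if s then m = op x y else op m y = x) /\ act_rel op w' m z
  end.

Definition connected (X : Type) (op : X -> X -> X) : Prop :=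
  forall x z : X, exists w : word X, act_rel op w x z.

Definition qpow (X : Type) (op : X -> X -> X) (N : nat) (x y : X) : X :=
  iter N (fun u => op u y) x.

Definition quandle_type (X : Type) (op : X -> X -> X) (t : nat) : Prop :=
  [/\ 0 < t,
      forall x y, qpow op t x y = x
    & forall N, 0 < N -> N < t -> ~ (forall x y, qpow op N x y = x)].

From mathcomp Require Import all_boot.
Set Implicit Arguments.

(** The defining relation rewritten as [e_z e_x = e_x e_(z ◁ x)] lets a
    generator [e_z] pass through [e_x^n] at the cost of becoming
    [e_(z ◁^n x)]; for [n = t] it comes out unchanged, so [e_x^t] is central.
    Conjugating by [e_y] then gives [e_(x ◁ y)^t = e_y^-1 e_x^t e_y = e_x^t],
    and connectedness propagates this equality to all of [X]. Only the defining
    relations of [As(X)] and [x ◁^t y = x] are used, not the quandle axioms. *)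

Section AdjointGroup.
Variables (X : Type) (op : X -> X -> X).
Local Notation E := (as_eq op).

Lemma as_eq_cat u u' v v' : E u u' -> E v v' -> E (u ++ v) (u' ++ v').
Proof.
move=> Eu Ev; apply: (as_trans (v := u' ++ v)).
  by have := as_cong [::] v Eu; rewrite !cat0s.
by have := as_cong u' [::] Ev; rewrite !cats0.
Qed.

Lemma as_eq_catl u v v' : E v v' -> E (u ++ v) (u ++ v').
Proof. exact/as_eq_cat/as_refl. Qed.

Lemma as_eq_catr u u' v : E u u' -> E (u ++ v) (u' ++ v).
Proof. by move=> Eu; apply: as_eq_cat Eu (as_refl _ _). Qed.

Lemma as_eq_cons_cancel y s u : E [:: (y, s), (y, ~~ s) & u] u.
Proof. exact: as_eq_catr [:: _; _] [::] u (as_cancel op y s). Qed.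

Lemma as_eq_consK a u v : E (a :: u) (a :: v) -> E u v.
Proof.
case: a => y s Euv.
have Einv w : E [:: (y, ~~ s), (y, s) & w] w.
  by have := as_eq_cons_cancel y (~~ s) w; rewrite negbK.
apply: as_trans (as_sym (Einv u)) _; apply: as_trans (Einv v).
exact: as_eq_catl [:: (y, ~~ s)] _ _ Euv.
Qed.

Lemma as_eq_gen_swap x z : E [:: (z, true); (x, true)] [:: (x, true); (op z x, true)].
Proof.
apply: as_sym; apply: as_trans (as_eq_catl [:: (x, true)] (as_rel op z x)) _.
exact: as_eq_cons_cancel.
Qed.

Lemma as_eq_gen_nseq n x z :
  E ((z, true) :: nseq n (x, true)) (nseq n (x, true) ++ [:: (qpow op n z x, true)]).
Proof.
elim: n z => [|n IHn] z /=; first exact: as_refl.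
apply: as_trans (as_eq_catr (nseq n (x, true)) (as_eq_gen_swap x z)) _.
have -> : op (qpow op n z x) x = qpow op n (op z x) x by rewrite /qpow -(iterS n (fun u => op u x)) iterSr.
exact: as_eq_catl [:: (x, true)] _ _ (IHn (op z x)).
Qed.

Lemma as_eq_conj_nseq n x y :
  E ((y, true) :: nseq n (op x y, true)) (nseq n (x, true) ++ [:: (y, true)]).
Proof.
elim: n => [|n IHn] /=; first exact: as_refl.
apply: as_trans (as_eq_catr (nseq n (op x y, true)) (as_sym (as_eq_gen_swap y x))) _.
exact: as_eq_catl [:: (x, true)] _ _ IHn.
Qed.

Definition commutes_with (c : word X) (a : X * bool) := E (a :: c) (c ++ [:: a]).

Lemma commutes_with_inv c z : commutes_with c (z, true) -> commutes_with c (z, false).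
Proof.
move=> cz; apply: (@as_eq_consK (z, true)).
apply: as_trans (as_eq_cons_cancel z true c) _; apply: as_sym.
apply: as_trans (as_eq_catr [:: (z, false)] cz) _.
by rewrite -catA; have := as_eq_catl c (as_cancel op z true); rewrite cats0.
Qed.

Lemma central_of_commutes_with c :
  (forall z, commutes_with c (z, true)) -> forall w, E (c ++ w) (w ++ c).
Proof.
move=> cz; elim=> [|a w IHw]; first by rewrite cats0; apply: as_refl.
have ca : commutes_with c a by case: a => z [|]; last apply: commutes_with_inv.
rewrite -cat1s catA; apply: as_trans (as_eq_catr w (as_sym ca)) _.
exact: as_eq_catl [:: a] _ _ IHw.
Qed.

Variable t : nat.
Hypothesis qpow_t : forall x y, qpow op t x y = x.

Lemma nseq_type_central x w : E (nseq t (x, true) ++ w) (w ++ nseq t (x, true)).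
Proof.
apply: central_of_commutes_with => z.
by have := as_eq_gen_nseq t x z; rewrite qpow_t.
Qed.

Lemma nseq_type_op x y : E (nseq t (op x y, true)) (nseq t (x, true)).
Proof.
apply: (@as_eq_consK (y, true)); apply: as_trans (as_eq_conj_nseq t x y) _.
exact: nseq_type_central.
Qed.

Lemma nseq_type_act w x z :
  act_rel op w x z -> E (nseq t (x, true)) (nseq t (z, true)).
Proof.
elim: w x => [|[y s] w IHw] x /=; first by move=> ->; apply: as_refl.
case=> m [xm /IHw]; apply: as_trans.
case: s xm => [->|<-]; first exact/as_sym/nseq_type_op.
exact: nseq_type_op.
Qed.

End AdjointGroup.

Theorem lemma3p5 (X : Type) (op : X -> X -> X) (t : nat) :
  quandle op -> connected op -> quandle_type op t ->
  (forall x y : X, as_eq op (nseq t (x, true)) (nseq t (y, true))) /\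
  (forall (x : X) (w : word X),
      as_eq op (nseq t (x, true) ++ w) (w ++ nseq t (x, true))).
Proof.
move=> _ conn [_ qpow_t _]; split; last exact: nseq_type_central.
by move=> x y; have [w xy] := conn x y; apply: nseq_type_act xy.
Qed.
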